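(* For any finite quasi-discrete closure model $\mathcal{M}=((X,\mathcal{C}_R),\mathcal{V})$, any SLCS formula $\phi$ and any $x\in X$: $x\in\mathtt{Sat}(\mathcal{M},\phi)$ if and only if $\mathcal{M},x\models\phi$.
   Context: For $R\subseteq X\times X$, $\mathcal{C}_R(A)=A\cup\{x\mid\exists a\in A.(a,x)\in R\}$; a finite quasi-discrete closure model is $((X,\mathcal{C}_R),\mathcal{V})$ with $X$ finite and $\mathcal{V}:AP\to 2^X$. Paths are continuous maps $p:(\mathbb{N},\mathcal{C}_\succ)\to(X,\mathcal{C}_R)$, where $\succ=\{(n,n+1)\}$ and continuity means $p(\mathcal{C}_\succ(S))\subseteq\mathcal{C}_R(p(S))$ for all $S\subseteq\mathbb{N}$. SLCS formulas: $\Phi::=a\mid\top\mid\lnot\Phi\mid\Phi\land\Phi\mid\mathcal{N}\Phi\mid\Phi\,\mathcal{S}\,\Phi\mid\Phi\rightsquigarrow\Phi$. Semantics: $x\models a$ iff $x\in\mathcal{V}(a)$; boolean connectives classically; $x\models\mathcal{N}\phi$ iff $x\in\mathcal{C}_R(\{y\mid y\models\phi\})$; $x\models\phi_1\,\mathcal{S}\,\phi_2$ iff $x\models\phi_1$ and for every path $p$ with $p(0)=x$ and every $l\in\mathbb{N}$, if $p(l)\models\lnot\phi_1$ then some $k$ with $0<k\le l$ has $p(k)\models\phi_2$; $x\models\phi_1\rightsquigarrow\phi_2$ iff $x\models\phi_2$ and there exist $y$, a path $p$ and $l$ with $p(0)=y$, $p(l)=x$, $y\models\phi_1$ and $p(i)\models\phi_2$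 for all $0<i<l$. Let $\mathit{pre}(x)=\{y\mid(y,x)\in R\}$, $\mathit{post}(x)=\{y\mid(x,y)\in R\}$. The procedure $\mathtt{Sat}(\mathcal{M},\phi)$ is defined recursively: $\top\mapsto X$; $a\mapsto\mathcal{V}(a)$; $\lnot\phi_1\mapsto X\setminus\mathtt{Sat}(\mathcal{M},\phi_1)$; $\phi_1\land\phi_2\mapsto\mathtt{Sat}(\mathcal{M},\phi_1)\cap\mathtt{Sat}(\mathcal{M},\phi_2)$; $\mathcal{N}\phi_1\mapsto\mathcal{C}_R(\mathtt{Sat}(\mathcal{M},\phi_1))$. For $\phi_1\,\mathcal{S}\,\phi_2$: $V:=\mathtt{Sat}(\mathcal{M},\phi_1)$, $Q:=\mathtt{Sat}(\mathcal{M},\phi_2)$, $T:=\mathcal{C}_R(V\cup Q)\setminus(V\cup Q)$; while $T\neq\emptyset$: $T':=\emptyset$, for each $x\in T$ let $N:=\mathit{pre}(x)\cap V$, set $V:=V\setminus N$, $T':=T'\cup(N\setminus Q)$; then $T:=T'$; return $V$. For $\phi_1\rightsquigarrow\phi_2$: $V:=\mathtt{Sat}(\mathcal{M},\phi_1)$, $Q:=\mathtt{Sat}(\mathcal{M},\phi_2)$, $T:=\mathcal{C}_R(V)\cap Q$, $S:=T$, $Q:=Q\setminus T$; while $T\neq\emptyset$: $T':=\emptyset$, for each $x\in T$ set $T':=T'\cup(Q\cap\mathit{post}(x))$; then $Q:=Q\setminus T'$, $S:=S\cup T'$, $T:=T'$; return $S$. *)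

From mathcomp Require Import all_boot.
Set Implicit Arguments.
Unset Strict Implicit.
Unset Printing Implicit Defensive.

Definition clos {T : Type} (r : T -> T -> Prop) (A : T -> Prop) : T -> Prop :=
  fun x => A x \/ exists a, A a /\ r a x.

Definition succ_rel (n m : nat) : Prop := m = n.+1.

Section Model.
Variables (X : finType) (R : rel X).

(* Continuous map (nat, C_succ) -> (X, C_R):  p(C_succ(S)) ⊆ C_R(p(S)). *)
Definition is_path (p : nat -> X) : Prop :=
  forall (S : nat -> Prop) (y : X),
    (exists n, clos succ_rel S n /\ p n = y) ->
    clos (fun a b => R a b) (fun z => exists m, S m /\ p m = z) y.

Definition CRs (A : {set X}) : {set X} :=
  A :|: [set x | [exists a in A, R a x]].

Definition pre (x : X) : {set X} := [set y | R y x].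
Definition post (x : X) : {set X} := [set y | R x y].
End Model.

Inductive formula (AP : Type) : Type :=
  | FAtom of AP
  | FTop
  | FNot of formula AP
  | FAnd of formula AP & formula AP
  | FNear of formula AP
  | FSurr of formula AP & formula AP
  | FReach of formula AP & formula AP.

Arguments FTop {AP}.

Fixpoint models (X : finType) (R : rel X) (AP : Type) (V : AP -> {set X})
  (f : formula AP) : X -> Prop :=
  match f with
  | FAtom a => fun x => x \in V a
  | FTop => fun _ => True
  | FNot f1 => fun x => ~ models R V f1 x
  | FAnd f1 f2 => fun x => models R V f1 x /\ models R V f2 x
  | FNear f1 => clos (fun a b => R a b) (models R V f1)
  | FSurr f1 f2 => fun x =>
      models R V f1 x /\
      forall p : nat -> X, is_path R p -> p 0 = x ->
        forall l : nat, ~ models R V f1 (p l) ->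
          exists k, 0 < k <= l /\ models R V f2 (p k)
  | FReach f1 f2 => fun x =>
      models R V f2 x /\
      exists (y : X) (p : nat -> X) (l : nat),
        is_path R p /\ p 0 = y /\ p l = x /\ models R V f1 y /\
        forall i, 0 < i < l -> models R V f2 (p i)
  end.

Section Algo.
Variables (X : finType) (R : rel X).

(* body of the "for each x in T" loop for surrounded: state (V, T') *)
Definition surr_inner (Q : {set X}) (VT : {set X} * {set X}) (x : X)
  : {set X} * {set X} :=
  let N := pre R x :&: VT.1 in (VT.1 :\: N, VT.2 :|: (N :\: Q)).

(* while T <> ∅ loop, run with fuel (#|X|.+1 suffices) *)
Fixpoint surr_loop (fuel : nat) (Q V T : {set X}) : {set X} :=
  match fuel with
  | 0 => V
  | n.+1 =>
      if T == set0 then V else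
      let VT := foldl (surr_inner Q) (V, set0) (enum T) in
      surr_loop n Q VT.1 VT.2
  end.

Definition sat_surr (V Q : {set X}) : {set X} :=
  surr_loop #|X|.+1 Q V (CRs R (V :|: Q) :\: (V :|: Q)).

Fixpoint reach_loop (fuel : nat) (Q S T : {set X}) : {set X} :=
  match fuel with
  | 0 => S
  | n.+1 =>
      if T == set0 then S else
      let T' := foldl (fun T' x => T' :|: (Q :&: post R x)) set0 (enum T) in
      reach_loop n (Q :\: T') (S :|: T') T'
  end.

Definition sat_reach (V Q : {set X}) : {set X} :=
  let T := CRs R V :&: Q in
  reach_loop #|X|.+1 (Q :\: T) T T.
End Algo.

Fixpoint Sat (X : finType) (R : rel X) (AP : Type) (V : AP -> {set X})
  (f : formula AP) : {set X} :=
  match f with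
  | FAtom a => V a
  | FTop => setT
  | FNot f1 => ~: Sat R V f1
  | FAnd f1 f2 => Sat R V f1 :&: Sat R V f2
  | FNear f1 => CRs R (Sat R V f1)
  | FSurr f1 f2 => sat_surr R (Sat R V f1) (Sat R V f2)
  | FReach f1 f2 => sat_reach R (Sat R V f1) (Sat R V f2)
  end.

(* Paths of the quasi-discrete space are the sequences whose consecutive
   points are equal or R-related (is_pathP).  The reachability loop computes the least set
   containing C_R(V) ∩ Q and closed under R-successors lying in Q, which is the
   set of points reached from V by a path staying in Q.  The surroundedness
   loop deletes from V exactly the points that escape, i.e. from which an
   R-path avoiding Q after its start leaves V; these are the points of V where
   phi1 S phi2 fails.  A round with a nonempty worklist strictly shrinks Q
   (resp. V), so #|X|.+1 rounds suffice. *)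

From mathcomp Require Import all_boot.
Set Implicit Arguments.
Unset Strict Implicit.
Unset Printing Implicit Defensive.

Lemma leq_cardsD_neq0 (T : finType) (A B : {set T}) :
  B \subset A -> #|A :\: B| + (B != set0) <= #|A|.
Proof.
move=> sBA; rewrite -(cardsID B A) (setIidPr sBA) addnC leq_add2r.
by have [->|nB] := eqVneq B set0; rewrite // card_gt0.
Qed.

Section Paths.
Variables (X : finType) (R : rel X).
Implicit Types (p : nat -> X) (y z : X).

Lemma is_pathP p : is_path R p <-> forall n, p n.+1 = p n \/ R (p n) (p n.+1).
Proof.
split=> [Pp n | Pp S y [n [[Sn|[m [Sm ->]]] <-]]].
- have [|[m [-> ->]]|[_ [[m [-> <-]] Rmn]]] := Pp (eq^~ n) (p n.+1);
    [|by left|by right].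
  by exists n.+1; split=> //; right; exists n.
- by left; exists n.
- have [->|Rm] := Pp m; first by left; exists m.
  by right; exists (p m); split=> //; exists m.
Qed.

Lemma is_path_const y : is_path R (fun=> y).
Proof. by apply/is_pathP; left. Qed.

Lemma is_path_behead p : is_path R p -> is_path R (fun i => p i.+1).
Proof. by move/is_pathP=> Pp; apply/is_pathP=> n; apply: Pp. Qed.

Lemma is_path_cons y p :
  is_path R p -> R y (p 0) -> is_path R (fun i => if i is i'.+1 then p i' else y).
Proof. by move/is_pathP=> Pp Ry; apply/is_pathP=> -[|n]; [right|apply: Pp]. Qed.

Lemma is_path_rcons p l z :
  is_path R p -> R (p l) z -> is_path R (fun i => if i <= l then p i else z).
Proof.
move/is_pathP=> Pp Rlz; apply/is_pathP=> n.
by case: (ltngtP n l) => [_|_|->]; [apply: Pp|left|right].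
Qed.

End Paths.

Section Rounds.
Variables (X : finType) (R : rel X).
Implicit Types (Q V A T : {set X}).

Definition preds_in (V T : {set X}) : {set X} := V :&: \bigcup_(t in T) pre R t.
Definition succs_in (Q T : {set X}) : {set X} := Q :&: \bigcup_(t in T) post R t.

Lemma foldl_surr_inner Q V A (s : seq X) :
  foldl (surr_inner R Q) (V, A) s =
  (V :\: \bigcup_(t <- s) pre R t, A :|: (V :&: \bigcup_(t <- s) pre R t) :\: Q).
Proof.
elim: s V A => [|t s IH] V A /=.
  by rewrite big_nil setD0 setI0 set0D setU0.
rewrite IH big_cons /=; congr pair; apply/setP=> y; rewrite !inE /=;
  by case: (R y t); case: (y \in V); case: (y \in A); case: (y \in Q);
     case: (y \in \bigcup_(_ <- s) _).
Qed.

Lemma surr_round Q V T :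
  foldl (surr_inner R Q) (V, set0) (enum T) =
  (V :\: preds_in V T, preds_in V T :\: Q).
Proof. by rewrite foldl_surr_inner big_enum set0U setDIr setDv set0U. Qed.

Lemma foldl_reach_inner Q A (s : seq X) :
  foldl (fun T' x => T' :|: (Q :&: post R x)) A s =
  A :|: Q :&: \bigcup_(t <- s) post R t.
Proof.
elim: s A => [|t s IH] A /=; first by rewrite big_nil setI0 setU0.
by rewrite IH big_cons setIUr setUA.
Qed.

Lemma reach_round Q T :
  foldl (fun T' x => T' :|: (Q :&: post R x)) set0 (enum T) = succs_in Q T.
Proof. by rewrite foldl_reach_inner big_enum set0U. Qed.

End Rounds.

Section ReachLoop.
Variables (X : finType) (R : rel X) (T0 Q0 : {set X}).
Implicit Types (Q S T : {set X}).

Inductive reachable : X -> Prop :=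
| reachable_init y of y \in T0 : reachable y
| reachable_step a b of reachable a & R a b & b \in Q0 : reachable b.

(* [S] is the part found so far, [T] its frontier, [Q] the unvisited part of [Q0]. *)
Definition reach_inv Q S T : Prop :=
  [/\ T0 \subset S, T \subset S, {in S, forall y, reachable y}, Q = Q0 :\: S
    & forall a b, a \in S :\: T -> R a b -> b \in Q0 -> b \in S].

Lemma reach_inv_done Q S : reach_inv Q S set0 -> forall x, x \in S <-> reachable x.
Proof.
case=> sT0S _ Sreach _ Sclosed x; split; first exact: Sreach.
elim=> [y /(subsetP sT0S) // | a b _ aS Rab bQ0].
by apply: Sclosed Rab bQ0; rewrite setD0.
Qed.

Lemma reach_inv_round Q S T :
  reach_inv Q S T ->
  reach_inv (Q :\: succs_in R Q T) (S :|: succs_in R Q T) (succs_in R Q T).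
Proof.
case=> sT0S sTS Sreach defQ Sclosed.
have succsP y : reflect [/\ y \in Q0, y \notin S & exists2 t, t \in T & R t y]
                        (y \in succs_in R Q T).
  rewrite /succs_in defQ !inE -andbA; apply: (iffP and3P) => -[yS yQ0].
    by case/bigcupP=> t tT; rewrite inE => Rty; split=> //; exists t.
  by case=> t tT Rty; split=> //; apply/bigcupP; exists t; rewrite ?inE.
split.
- exact: subset_trans sT0S (subsetUl _ _).
- exact: subsetUr.
- move=> y /setUP[/Sreach // | /succsP[yQ0 _ [t tT Rty]]].
  exact: reachable_step (Sreach t (subsetP sTS t tT)) Rty yQ0.
- by rewrite defQ setDDl.
- move=> a b /setDP[/setUP[aS|aN] aNn] Rab bQ0; last by rewrite aN in aNn.
  apply/setUP; have [aT|aT] := boolP (a \in T).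
    have [bS|bS] := boolP (b \in S); [by left | right].
    by apply/succsP; split=> //; exists a.
  by left; apply: Sclosed Rab bQ0; apply/setDP.
Qed.

Lemma reach_loopP fuel Q S T :
  reach_inv Q S T -> #|Q| + (T != set0) <= fuel ->
  forall x, x \in reach_loop R fuel Q S T <-> reachable x.
Proof.
elim: fuel Q S T => [|n IH] Q S T inv fuelQ /=.
  move: fuelQ inv; rewrite leqn0 addn_eq0 eqb0 negbK => /andP[_ /eqP->].
  exact: reach_inv_done.
case: eqP => [T_0|/eqP Tn]; first by move: inv; rewrite T_0; apply: reach_inv_done.
rewrite reach_round; apply: IH; first exact: reach_inv_round.
have sQ : succs_in R Q T \subset Q by apply: subsetIl.
by apply: leq_trans (leq_cardsD_neq0 sQ) _; move: fuelQ; rewrite Tn addn1 ltnS.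
Qed.

End ReachLoop.

Section SurroundLoop.
Variables (X : finType) (R : rel X) (V1 Q : {set X}).
Implicit Types (V T : {set X}).

(* [escapes y]: some R-path from [y] whose later points avoid [Q] leaves [V1]. *)
Inductive escapes : X -> Prop :=
| escapes_now y z of R y z & z \notin Q & z \notin V1 : escapes y
| escapes_later y z of R y z & z \notin Q & escapes z : escapes y.

(* [V] is the current candidate set and [T] the worklist: points outside [V]
   and [Q] whose [V]-predecessors, all escaping, are deleted in the next round. *)
Definition surr_inv V T : Prop :=
  [/\ V \subset V1, {in V1 :\: V, forall y, escapes y},
      (forall t y, t \in T -> R y t -> escapes y)
    & forall y z, y \in V -> R y z -> z \notin Q -> z \notin V -> z \in T].

Lemma surr_inv_done V :
  surr_inv V set0 -> forall x, x \in V <-> x \in V1 /\ ~ escapes x.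
Proof.
case=> sVV1 V1Vesc _ Vclosed x; split=> [xV | [xV1 xesc]].
  split; first exact: subsetP sVV1 x xV.
  have escV y : escapes y -> y \notin V.
    elim=> {y} [y z Ryz zQ zV1 | y z Ryz zQ _ zV]; apply/negP=> yV.
      by have := Vclosed y z yV Ryz zQ (contra (subsetP sVV1 z) zV1); rewrite inE.
    by have := Vclosed y z yV Ryz zQ zV; rewrite inE.
  by move/escV; rewrite xV.
by apply/negPn/negP=> xV; apply/xesc/V1Vesc; rewrite inE xV.
Qed.

Lemma surr_inv_round V T :
  surr_inv V T -> surr_inv (V :\: preds_in R V T) (preds_in R V T :\: Q).
Proof.
case=> sVV1 V1Vesc Tesc Vclosed.
have predsP y : reflect (y \in V /\ exists2 t, t \in T & R y t) (y \in preds_in R V T).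
  rewrite /preds_in inE; apply: (iffP andP) => -[yV].
    by case/bigcupP=> t tT; rewrite inE => Ryt; split=> //; exists t.
  by case=> t tT Ryt; split=> //; apply/bigcupP; exists t; rewrite ?inE.
have predsesc y : y \in preds_in R V T -> escapes y.
  by case/predsP=> _ [t tT Ryt]; apply: Tesc tT Ryt.
split.
- exact: subset_trans (subsetDl _ _) sVV1.
- move=> y /setDP[yV1]; rewrite in_setD negb_and negbK => /orP[/predsesc // | yV].
  by apply: V1Vesc; rewrite in_setD yV.
- by move=> t y /setDP[tN tQ] Ryt; apply: escapes_later Ryt tQ (predsesc t tN).
- move=> y z /setDP[yV yN] Ryz zQ zVN; apply/setDP; split=> //.
  have [zV|zV] := boolP (z \in V); first by move: zVN; rewrite in_setD zV andbT negbK.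
  by case/negP: yN; apply/predsP; split=> //; exists z => //; apply: Vclosed Ryz zQ zV.
Qed.

Lemma surr_loopP fuel V T :
  surr_inv V T -> #|V| + (T != set0) <= fuel ->
  forall x, x \in surr_loop R fuel Q V T <-> x \in V1 /\ ~ escapes x.
Proof.
elim: fuel V T => [|n IH] V T inv fuelV /=.
  move: fuelV inv; rewrite leqn0 addn_eq0 eqb0 negbK => /andP[_ /eqP->].
  exact: surr_inv_done.
case: eqP => [T_0|/eqP Tn]; first by move: inv; rewrite T_0; apply: surr_inv_done.
rewrite surr_round /=; apply: IH; first exact: surr_inv_round.
have sN : preds_in R V T \subset V by apply: subsetIl.
apply: leq_trans (leq_add (leqnn _) _) (leq_trans (leq_cardsD_neq0 sN) _).
  by have [->|_] := eqVneq (preds_in R V T) set0; [rewrite set0D eqxx | exact: leq_b1].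
by move: fuelV; rewrite Tn addn1 ltnS.
Qed.

End SurroundLoop.

Section Correctness.
Variables (X : finType) (R : rel X).
Implicit Types (Q A : {set X}) (p : nat -> X).

Lemma CRsP A x : reflect (x \in A \/ exists2 a, a \in A & R a x) (x \in CRs R A).
Proof.
apply: (iffP setUP) => [[xA|]|[xA|[a aA Rax]]]; [by left | | by left | right].
  by rewrite inE => /existsP[a /andP[aA Rax]]; right; exists a.
by rewrite inE; apply/existsP; exists a; rewrite aA.
Qed.

Lemma in_CRs_clos A (P : X -> Prop) :
  (forall y, y \in A <-> P y) -> forall x, x \in CRs R A <-> clos R P x.
Proof.
move=> AP x; split=> [/CRsP[/AP|[a /AP a1 Rax]] | [/AP|[a [/AP aA Rax]]]].
- by left.
- by right; exists a.
- by move=> xA; apply/CRsP; left.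
- by apply/CRsP; right; exists a.
Qed.

Lemma in_sat_surr (V1 : {set X}) Q x :
  x \in sat_surr R V1 Q <-> x \in V1 /\ ~ escapes R V1 Q x.
Proof.
apply: surr_loopP; last by rewrite -addn1 leq_add ?max_card ?leq_b1.
split=> [||t y|y z yV1 Ryz zQ zV1].
- exact: subxx.
- by move=> y; rewrite setDv inE.
- by rewrite !inE negb_or => /andP[/andP[tV1 tQ] _] Ryt; apply: escapes_now Ryt tQ tV1.
- rewrite in_setD in_setU negb_or zV1 zQ /=.
  by apply/CRsP; right; exists y; rewrite // inE yV1.
Qed.

Lemma in_sat_reach (V1 : {set X}) Q x :
  x \in sat_reach R V1 Q <-> reachable R (CRs R V1 :&: Q) Q x.
Proof.
apply: reach_loopP; last by rewrite -addn1 leq_add ?max_card ?leq_b1.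
split=> //; first by move=> y; apply: reachable_init.
by move=> a b; rewrite setDv inE.
Qed.

(* The clauses of [models] for [FSurr] and [FReach], over arbitrary
   interpretations [P1], [P2] of the two subformulas. *)
Definition surrounded (P1 P2 : X -> Prop) (x : X) : Prop :=
  P1 x /\ forall p, is_path R p -> p 0 = x -> forall l, ~ P1 (p l) ->
    exists k, 0 < k <= l /\ P2 (p k).

Definition reaches (P1 P2 : X -> Prop) (x : X) : Prop :=
  P2 x /\ exists y p l, is_path R p /\ p 0 = y /\ p l = x /\ P1 y /\
    forall i, 0 < i < l -> P2 (p i).

Lemma escapes_path (V1 : {set X}) Q y :
  escapes R V1 Q y -> exists p l,
    [/\ is_path R p, p 0 = y, p l \notin V1 & forall k, 0 < k <= l -> p k \notin Q].
Proof.
elim=> {y} [y z Ryz zQ zV1 | y z Ryz zQ _ [p [l [Pp p0 plV1 pQ]]]].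
  exists (fun i => if i is _.+1 then z else y), 1.
  split=> //; last by case=> [|[|]].
  by apply: (is_path_cons _ Ryz); apply: is_path_const.
exists (fun i => if i is i'.+1 then p i' else y), l.+1.
split=> //; first by apply: is_path_cons Pp _; rewrite p0.
by case=> [//|[|k]] kl /=; [rewrite p0 | apply: pQ].
Qed.

Lemma path_escapes (V1 : {set X}) Q p l :
  is_path R p -> p l \notin V1 -> (forall k, 0 < k <= l -> p k \notin Q) ->
  escapes R V1 Q (p 0) \/ p 0 \notin V1.
Proof.
elim: l p => [|l IH] p /[dup] Pp /is_pathP Pstep plV1 pQ; first by right.
have p1Q : p 1 \notin Q by apply: pQ.
have pSQ k : 0 < k <= l -> p k.+1 \notin Q.
  by case/andP=> _ kl; apply: pQ; rewrite !ltnS.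
have IH1 := IH _ (is_path_behead Pp) plV1 pSQ.
case: (Pstep 0) => [<- // | R01]; left.
case: IH1 => [esc1 | p1V1].
  exact: escapes_later R01 p1Q esc1.
exact: escapes_now R01 p1Q p1V1.
Qed.

Lemma surrounded_escapes (V1 Q : {set X}) (P1 P2 : X -> Prop) :
  (forall y, y \in V1 <-> P1 y) -> (forall y, y \in Q <-> P2 y) ->
  forall x, surrounded P1 P2 x <-> x \in V1 /\ ~ escapes R V1 Q x.
Proof.
move=> V1P QP x; split=> [[/V1P xV1 surr] | [xV1 xesc]].
  split=> // /escapes_path[p [l [Pp p0 plV1 pQ]]].
  have [k [kl /QP pkQ]] := surr p Pp p0 l (fun pl1 => negP plV1 ((V1P _).2 pl1)).
  by case/negP: (pQ k kl).
split=> [|p Pp p0 l /V1P-/negP plV1]; first exact/V1P.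
have [/hasP[k]|noQ] := boolP (has (fun k => p k \in Q) (iota 1 l)).
  by rewrite mem_iota add1n ltnS => kl /QP pk; exists k.
have pQ k : 0 < k <= l -> p k \notin Q.
  by move=> kl; apply: contra noQ => pk; apply/hasP; exists k; rewrite ?mem_iota ?add1n.
by case: (path_escapes Pp plV1 pQ); rewrite p0 // xV1.
Qed.

Lemma path_reachable (V1 Q : {set X}) p l :
  is_path R p -> p 0 \in V1 -> (forall i, 0 < i <= l -> p i \in Q) ->
  p l \in V1 \/ reachable R (CRs R V1 :&: Q) Q (p l).
Proof.
move=> /is_pathP Pstep p0V1; elim: l => [|l IH] pQ; first by left.
have plQ : p l.+1 \in Q by apply: pQ; rewrite leqnn.
have IHl : p l \in V1 \/ reachable R (CRs R V1 :&: Q) Q (p l).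
  by apply: IH => i /andP[i0 il]; apply: pQ; rewrite i0 (leqW il).
case: (Pstep l) => [->//|Rl]; right.
case: IHl => [plV1|plR]; last exact: reachable_step plR Rl plQ.
by apply: reachable_init; rewrite inE plQ andbT; apply/CRsP; right; exists (p l).
Qed.

Lemma reaches_reachable (V1 Q : {set X}) (P1 P2 : X -> Prop) :
  (forall y, y \in V1 <-> P1 y) -> (forall y, y \in Q <-> P2 y) ->
  forall x, reaches P1 P2 x <-> reachable R (CRs R V1 :&: Q) Q x.
Proof.
move=> V1P QP x; split.
  case=> /QP xQ [y [p [l [Pp [p0 [plx [/V1P yV1 pQ]]]]]]].
  have pQ' i : 0 < i <= l -> p i \in Q.
    case/andP=> i0; rewrite leq_eqVlt => /orP[/eqP->|il]; first by rewrite plx.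
    by apply/QP/pQ; rewrite i0.
  have p0V1 : p 0 \in V1 by rewrite p0.
  case: (path_reachable Pp p0V1 pQ'); rewrite plx // => xV1.
  by apply: reachable_init; rewrite inE xQ andbT; apply/CRsP; left.
elim=> [y | a b _ [aQ [y [p [l [Pp [p0 [pla [yV1 pQ]]]]]]]] Rab bQ].
  rewrite inE => /andP[/CRsP[yV1|[a aV1 Ray]] /QP yQ]; split=> //.
    by exists y, (fun=> y), 0; do !split=> //; [exact: is_path_const | apply/(V1P y)].
  exists a, (fun i => if i is 0 then a else y), 1; do !split=> //.
  - by apply: (is_path_cons _ Ray); apply: is_path_const.
  - by apply/(V1P a).
  - by case=> [|[|]].
split; first exact/QP.
exists y, (fun i => if i <= l then p i else b), l.+1; do !split=> //=.
- by apply: is_path_rcons Pp _; rewrite pla.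
- by rewrite ltnn.
- move=> i /andP[i0]; rewrite ltnS => il; rewrite il.
  move: il; rewrite leq_eqVlt => /orP[/eqP->|il]; first by rewrite pla.
  by apply: pQ; rewrite i0 il.
Qed.

End Correctness.

Theorem theorem6p3 (X : finType) (R : rel X) (AP : Type)
  (V : AP -> {set X}) (phi : formula AP) (x : X) :
  x \in Sat R V phi <-> models R V phi x.
Proof.
elim: phi x => [a || f IH | f1 IH1 f2 IH2 | f IH | f1 IH1 f2 IH2 | f1 IH1 f2 IH2] x /=.
- by [].
- by rewrite inE.
- by rewrite inE; split=> [/negP nf /IH | nf]; last apply/negP=> /IH.
- by rewrite inE; split=> [/andP[/IH1 ? /IH2 ?] | [/IH1 -> /IH2 ->]].
- exact: (in_CRs_clos R IH x).
- exact: iff_trans (in_sat_surr R _ _ x) (iff_sym (surrounded_escapes R IH1 IH2 x)).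
- exact: iff_trans (in_sat_reach R _ _ x) (iff_sym (reaches_reachable R IH1 IH2 x)).
Qed.
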